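(* Let $N \ge 1$ and $p \ge 1$. Then there exist $\delta_0>0$ and a closed half-space $H\subset \mathbb{R}^N$ with $0\in H$ such that for every $0<\delta<\delta_0$ there exists a measurable function $u:\mathbb{R}^N\to\mathbb{R}$ with $I_\delta(u^H)>I_\delta(u)$.
   Context: For $\delta>0$, $p\ge 1$ and measurable $u:\mathbb{R}^N\to\mathbb{R}$, define $$I_\delta(u):=\iint_{\{(x,y)\in\mathbb{R}^N\times\mathbb{R}^N:\ |u(y)-u(x)|>\delta\}}\frac{\delta^p}{|x-y|^{N+p}}\,dx\,dy \in[0,+\infty].$$ For a closed half-space $H\subset\mathbb{R}^N$, let $\sigma_H:\mathbb{R}^N\to\mathbb{R}^N$ denote the reflection across the hyperplane $\partial H$ (an isometry with $\sigma_H^2=\mathrm{Id}$ and $|x-y|<|x-\sigma_H(y)|$ for $x,y$ in the interior of $H$). The polarization (two-point rearrangement) of $u$ with respect to $H$ is $$u^H(x):=\begin{cases}\max\{u(x),u(\sigma_H(x))\}, & x\in H,\\ \min\{u(x),u(\sigma_H(x))\}, & x\in \mathbb{R}^N\setminus H.\end{cases}$$ *)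

From HB Require Import structures.
From mathcomp Require Import all_boot all_order all_algebra.
From mathcomp Require Import all_classical all_reals all_analysis.
Set Implicit Arguments. Unset Strict Implicit. Unset Printing Implicit Defensive.
Import Order.TTheory GRing.Theory Num.Theory.
Local Open Scope classical_set_scope.
Local Open Scope ring_scope.

Section Defs.
Variable R : realType.

Definition origin (n : nat) : n.-tuple R := [tuple (0:R) | i < n].

Definition dotN (n : nat) (a x : n.-tuple R) : R :=
  \sum_(i < n) tnth a i * tnth x i.

Definition distN (n : nat) (x y : n.-tuple R) : R :=
  Num.sqrt (\sum_(i < n) (tnth x i - tnth y i) ^+ 2).

Definition in_halfspace (n : nat) (a : n.-tuple R) (c : R) (x : n.-tuple R) : bool :=
  dotN a x <= c.

Definition reflect_hs (n : nat) (a : n.-tuple R) (c : R) (x : n.-tuple R) : n.-tuple R :=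
  [tuple tnth x i - 2 * ((dotN a x - c) / dotN a a) * tnth a i | i < n].

Definition polarize (n : nat) (a : n.-tuple R) (c : R) (u : n.-tuple R -> R)
  (x : n.-tuple R) : R :=
  if in_halfspace a c x then Num.max (u x) (u (reflect_hs a c x))
  else Num.min (u x) (u (reflect_hs a c x)).

(* Lebesgue integral over R^n of a nonnegative function, computed as the
   iterated integral (Tonelli) of the one-dimensional Lebesgue integral. *)
Fixpoint intRN (n : nat) : (n.-tuple R -> \bar R) -> \bar R :=
  match n with
  | 0 => fun f => f [tuple]
  | n'.+1 => fun f =>
      (\int[@lebesgue_measure R]_(x in [set: R])
          intRN (fun t : n'.-tuple R => f (cons_tuple x t)))%E
  end.

Definition Idelta (n : nat) (p delta : R) (u : n.-tuple R -> R) : \bar R :=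
  intRN (fun x : n.-tuple R => intRN (fun y : n.-tuple R =>
    if delta < `|u y - u x| then
      ((delta `^ p) / (distN x y `^ (n%:R + p)))%:E
    else 0%E)).

End Defs.

From mathcomp Require Import all_boot all_order all_algebra.
From mathcomp Require Import all_classical all_reals all_analysis.
From mathcomp Require Import measurable_realfun.
From mathcomp.algebra_tactics Require Import ring lra.
Import Order.TTheory GRing.Theory Num.Theory.
Local Open Scope classical_set_scope.
Local Open Scope ring_scope.

(* Take H = {x_1 <= 0}, so that sigma_H flips the sign of x_1, and let u be a
   step function taking five values: one on each of four unit boxes
   B_i = [s_i, s_i + 1] x [0,1]^(N-1), i < 4, and one on the rest of R^N.  The
   boxes come in mirror pairs B_1 = sigma B_0 and B_3 = sigma B_2, with B_0, B_1
   next to the hyperplane and B_2, B_3 further out.  The values are chosen so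
   that polarization only exchanges the values on B_0 and B_1, and so that the
   pairs of regions across which u jumps by more than delta are the same for u
   and u^H except that B_0 x B_3 is replaced by B_1 x B_3.  As B_1 is much closer
   to B_3 than B_0 is and the kernel |x - y|^(-N-p) is decreasing, the kernel is
   at least c_near on B_1 x B_3 and at most c_far < c_near on B_0 x B_3, whence
   I_delta(u) + 2 c_near <= I_delta(u^H) + 2 c_far; as I_delta(u) is finite,
   the inequality is strict.  The construction works for every delta > 0. *)

Section IteratedIntegral.
Context {R : realType}.

Lemma intRN_ge0 n (f : n.-tuple R -> \bar R) :
  (forall t, 0 <= f t)%E -> (0 <= intRN f)%E.
Proof.
elim: n f => [|n IH] f f0 /=; first exact: f0.
by apply: integral_ge0 => x _; apply: IH => t; exact: f0.
Qed.

Lemma measurable_intRN n d (X : measurableType d) (f : X -> n.-tuple R -> \bar R) :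
  measurable_fun setT (fun z : X * n.-tuple R => f z.1 z.2) ->
  (forall x t, 0 <= f x t)%E ->
  measurable_fun setT (fun x => intRN (f x)).
Proof.
elim: n d X f => [|n IH] d X f mf f0 /=.
  exact: (measurable_fun_pair1 [tuple] mf).
pose G (xz : X * R) := intRN (fun t => f xz.1 (cons_tuple xz.2 t)).
have mG : measurable_fun setT G.
  apply: IH => [|? ?]; last exact: f0.
  have -> : (fun z : (X * R) * n.-tuple R => f z.1.1 (cons_tuple z.1.2 z.2)) =
      (fun z : X * n.+1.-tuple R => f z.1 z.2) \o
      (fun z : (X * R) * n.-tuple R => (z.1.1, cons_tuple z.1.2 z.2)) by [].
  apply: measurableT_comp mf _; apply: measurable_fun_pair.
    exact: measurableT_comp measurable_fst measurable_fst.
  apply: measurable_cons measurable_snd.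
  exact: measurableT_comp measurable_snd measurable_fst.
apply: (@measurable_fun_fubini_tonelli_F _ _ X _ R lebesgue_measure G mG).
by move=> -[x z]; exact: intRN_ge0.
Qed.

Lemma measurable_intRN_cons n (f : n.+1.-tuple R -> \bar R) :
  measurable_fun setT f -> (forall t, 0 <= f t)%E ->
  measurable_fun setT (fun z : R => intRN (fun t => f (cons_tuple z t))).
Proof.
move=> mf f0; apply: measurable_intRN => [|? ?]; last exact: f0.
have -> : (fun z : R * n.-tuple R => f (cons_tuple z.1 z.2)) =
    f \o (fun z => cons_tuple z.1 z.2) by [].
apply: measurableT_comp mf _.
apply: (@measurable_cons _ _ _ _ (fun z : R * n.-tuple R => z.1) n snd).
  exact: measurable_fst.
exact: measurable_snd.
Qed.

Lemma measurable_cons_section n (f : n.+1.-tuple R -> \bar R) (z : R) :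
  measurable_fun setT f -> measurable_fun setT (fun t => f (cons_tuple z t)).
Proof.
move=> mf; have -> : (fun t => f (cons_tuple z t)) = f \o cons_tuple z by [].
apply: measurableT_comp mf _.
apply: (@measurable_cons _ _ _ _ (fun=> z) n id).
  exact: measurable_cst.
exact: measurable_id.
Qed.

Lemma le_intRN n (f g : n.-tuple R -> \bar R) :
  measurable_fun setT f -> measurable_fun setT g ->
  (forall t, 0 <= f t)%E -> (forall t, f t <= g t)%E -> (intRN f <= intRN g)%E.
Proof.
elim: n f g => [|n IH] f g mf mg f0 fg /=; first exact: fg.
have g0 t : (0 <= g t)%E by exact: le_trans (f0 t) (fg t).
apply: ge0_le_integral => //.
- by move=> z _; apply: intRN_ge0 => t; exact: f0.
- exact: measurable_intRN_cons.
- exact: measurable_intRN_cons.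
- move=> z _; apply: IH => [||t|t].
  + exact: measurable_cons_section.
  + exact: measurable_cons_section.
  + exact: f0.
  + exact: fg.
Qed.

Lemma intRN_D n (f g : n.-tuple R -> \bar R) :
  measurable_fun setT f -> measurable_fun setT g ->
  (forall t, 0 <= f t)%E -> (forall t, 0 <= g t)%E ->
  intRN (fun t => f t + g t)%E = (intRN f + intRN g)%E.
Proof.
elim: n f g => [|n IH] f g mf mg f0 g0 //=.
rewrite -ge0_integralD //.
- apply: eq_integral => z _; apply: IH => [||t|t].
  + exact: measurable_cons_section.
  + exact: measurable_cons_section.
  + exact: f0.
  + exact: g0.
- by move=> z _; apply: intRN_ge0 => t; exact: f0.
- exact: measurable_intRN_cons.
- by move=> z _; apply: intRN_ge0 => t; exact: g0.
- exact: measurable_intRN_cons.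
Qed.

Lemma le_intRN2 {m n} {f g : m.-tuple R -> n.-tuple R -> \bar R} :
  measurable_fun setT (fun z => f z.1 z.2) -> measurable_fun setT (fun z => g z.1 z.2) ->
  (forall x y, 0 <= f x y)%E -> (forall x y, f x y <= g x y)%E ->
  (intRN (fun x => intRN (f x)) <= intRN (fun x => intRN (g x)))%E.
Proof.
move=> mf mg f0 fg.
have g0 x y : (0 <= g x y)%E by exact: le_trans (f0 x y) (fg x y).
apply: le_intRN; [exact: measurable_intRN mf f0 | exact: measurable_intRN mg g0 | | ].
  by move=> x; exact: intRN_ge0.
move=> x; apply: le_intRN; [exact: measurable_fun_pair2 mf | exact: measurable_fun_pair2 mg | |].
  exact: f0.
exact: fg.
Qed.

Lemma intRN2_D m n (f g : m.-tuple R -> n.-tuple R -> \bar R) :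
  measurable_fun setT (fun z => f z.1 z.2) -> measurable_fun setT (fun z => g z.1 z.2) ->
  (forall x y, 0 <= f x y)%E -> (forall x y, 0 <= g x y)%E ->
  intRN (fun x => intRN (fun y => f x y + g x y)%E) =
  (intRN (fun x => intRN (f x)) + intRN (fun x => intRN (g x)))%E.
Proof.
move=> mf mg f0 g0.
rewrite -intRN_D; [|exact: measurable_intRN mf f0|exact: measurable_intRN mg g0| |];
  last 2 first.
- by move=> x; exact: intRN_ge0.
- by move=> x; exact: intRN_ge0.
congr intRN; apply: funext => x; apply: intRN_D.
- exact: measurable_fun_pair2 mf.
- exact: measurable_fun_pair2 mg.
- exact: f0.
- exact: g0.
Qed.

End IteratedIntegral.

Lemma lte_of_leD {R : realType} (a b : \bar R) (d1 d2 : R) : a \is a fin_num ->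
  (a + d1%:E <= b + d2%:E)%E -> d2 < d1 -> (a < b)%E.
Proof.
case: a => // r _; case: b => [s| |] //=; last by rewrite ltey.
by rewrite -!EFinD lee_fin lte_fin; lra.
Qed.

Section Slab.
Context {R : realType}.

Definition in_unit_cube {n} (t : n.-tuple R) : bool := [forall i, 0 <= tnth t i <= 1].

Lemma behead_tuple_cons n (z : R) (t : n.-tuple R) : behead_tuple (cons_tuple z t) = t.
Proof. exact: val_inj. Qed.

Lemma in_unit_cube0 (t : 0.-tuple R) : in_unit_cube t.
Proof. by apply/forallP => -[]. Qed.

Lemma in_unit_cube_cons n (z : R) (t : n.-tuple R) :
  in_unit_cube (cons_tuple z t) = (0 <= z <= 1) && in_unit_cube t.
Proof.
apply/forallP/andP => [H|[Hz /forallP Ht] i].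
  split; first by have := H ord0; rewrite tnth0.
  by apply/forallP => i; have := H (lift ord0 i); rewrite tnthS.
by case: (unliftP ord0 i) => [j ->|->]; rewrite ?tnthS ?tnth0.
Qed.

Definition slab {n} (a L : R) (x : n.+1.-tuple R) : bool :=
  (a <= tnth x ord0 <= a + L) && in_unit_cube (behead_tuple x).

Let measurable_slab_of n (a L : R) : measurable_fun setT (@in_unit_cube n) ->
  measurable_fun setT (@slab n a L).
Proof.
move=> mcube; apply: measurable_and.
  apply: measurable_and.
    by apply: measurable_fun_ler; [exact: measurable_cst | exact: measurable_tnth].
  by apply: measurable_fun_ler; [exact: measurable_tnth | exact: measurable_cst].
have -> : (fun t : n.+1.-tuple R => in_unit_cube (behead_tuple t)) =
  @in_unit_cube n \o (fun t : n.+1.-tuple R => [tuple of behead t]) by [].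
by apply: measurableT_comp mcube _; exact: measurable_behead.
Qed.

Lemma slab01_in_unit_cube n : @slab n 0 1 = @in_unit_cube n.+1.
Proof.
apply: funext => t; rewrite /slab add0r [in RHS](tuple_eta t).
have -> : [tuple of thead t :: behead t] = cons_tuple (thead t) (behead_tuple t).
  exact: val_inj.
by rewrite in_unit_cube_cons.
Qed.

Lemma measurable_in_unit_cube n : measurable_fun setT (@in_unit_cube n).
Proof.
elim: n => [|n IH].
  rewrite (_ : @in_unit_cube 0 = fun=> true); first exact: measurable_cst.
  by apply: funext => t; rewrite in_unit_cube0.
by rewrite -slab01_in_unit_cube; exact: measurable_slab_of.
Qed.

Lemma measurable_slab n (a L : R) : measurable_fun setT (@slab n a L).
Proof. by apply: measurable_slab_of; exact: measurable_in_unit_cube. Qed.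

Lemma measurable_fun_scale_bool d (X : measurableType d) (b : X -> bool) (c : R) :
  measurable_fun setT b -> measurable_fun setT (fun x => (c * (b x)%:R)%:E).
Proof.
move=> mb; apply/measurable_EFinP.
have -> : (fun x => c * (b x)%:R) = (fun x => if b x then c else 0).
  by apply: funext => x; case: (b x); rewrite ?mulr1 ?mulr0.
by apply: measurable_fun_ifT => //; exact: measurable_cst.
Qed.

Lemma integral_itv_indic (c a L : R) : 0 <= c -> 0 < L ->
  (\int[@lebesgue_measure R]_(z in [set: R]) (c * ((a <= z <= a + L)%R)%:R)%:E)%E
    = (c * L)%:E.
Proof.
move=> c0 L0.
have -> : (fun z : R => (c * ((a <= z <= a + L)%R)%:R)%:E) =
    (fun z => (c * \1_(`[a, a + L]%classic) z)%:E).
  apply: funext => z; rewrite indicE; congr ((_ * _)%:E); congr (_%:R).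
  have [H|H] := boolP (a <= z <= a + L).
    by rewrite mem_set //= in_itv.
  by rewrite memNset //= in_itv; exact/negP.
rewrite integralZl_indic //; last by move=> /lt_geF; rewrite c0.
rewrite integral_indic // setIT.
have := lebesgue_measure_itv `[a, a + L].
by rewrite /= lte_fin ltrDl L0 -EFinD addrAC subrr add0r => ->.
Qed.

Lemma intRN_unit_cube n (c : R) : 0 <= c ->
  intRN (fun t : n.-tuple R => (c * (in_unit_cube t)%:R)%:E) = c%:E.
Proof.
elim: n c => [|n IH] c c0 /=; first by rewrite in_unit_cube0 mulr1.
under eq_integral => z _.
  under eq_fun => t do rewrite in_unit_cube_cons -mulnb natrM mulrA.
  rewrite IH; last by rewrite mulr_ge0 ?ler0n.
  over.
by have := @integral_itv_indic c 0 1 c0 ltr01; rewrite add0r mulr1.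
Qed.

Lemma intRN_slab n (a L c : R) : 0 <= c -> 0 < L ->
  intRN (fun x : n.+1.-tuple R => (c * (slab a L x)%:R)%:E) = (c * L)%:E.
Proof.
move=> c0 L0 /=.
under eq_integral => z _.
  under eq_fun => t do rewrite /slab tnth0 behead_tuple_cons -mulnb natrM mulrA.
  rewrite intRN_unit_cube; last by rewrite mulr_ge0 ?ler0n.
  over.
exact: integral_itv_indic.
Qed.

Lemma intRN2_slab n (a L b M c : R) : 0 <= c -> 0 < L -> 0 < M ->
  intRN (fun x : n.+1.-tuple R => intRN (fun y : n.+1.-tuple R =>
    (c * (slab a L x && slab b M y)%:R)%:E)) = (c * M * L)%:E.
Proof.
move=> c0 L0 M0.
under eq_fun => x.
  under eq_fun => y do rewrite -mulnb natrM mulrA.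
  rewrite intRN_slab ?mulr_ge0 ?ler0n // mulrAC.
  over.
by rewrite (intRN_slab _ _ _ (c * M)) // mulr_ge0 // ltW.
Qed.

Lemma measurable_slab2 n (c a L b M : R) :
  measurable_fun setT (fun z : n.+1.-tuple R * n.+1.-tuple R =>
    (c * (slab a L z.1 && slab b M z.2)%:R)%:E).
Proof.
apply: measurable_fun_scale_bool; apply: measurable_and.
  exact: measurableT_comp (measurable_slab _ _ _) measurable_fst.
exact: measurableT_comp (measurable_slab _ _ _) measurable_snd.
Qed.

End Slab.

Section Kernel.
Context {R : realType}.

Definition Ikernel {n} (delta p : R) (x y : n.-tuple R) : R :=
  delta `^ p / distN x y `^ (n%:R + p).

Lemma le_div_powR {a q d1 d2 : R} : 0 <= a -> 0 < q -> 0 < d1 -> d1 <= d2 ->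
  a / d2 `^ q <= a / d1 `^ q.
Proof.
move=> a0 q0 d10 d12; have d20 := lt_le_trans d10 d12.
rewrite ler_wpM2l // lef_pV2 ?posrE ?powR_gt0 //.
by apply: ge0_ler_powR; rewrite ?nnegrE ?(ltW q0) ?(ltW d10) ?(ltW d20).
Qed.

Lemma lt_div_powR {a q d1 d2 : R} : 0 < a -> 0 < q -> 0 < d1 -> d1 < d2 ->
  a / d2 `^ q < a / d1 `^ q.
Proof.
move=> a0 q0 d10 d12; have d20 := lt_trans d10 d12.
rewrite ltr_pM2l // ltf_pV2 ?posrE ?powR_gt0 //.
by apply: gt0_ltr_powR; rewrite ?nnegrE ?(ltW d10) ?(ltW d20).
Qed.

Lemma Ikernel_ge0 n (delta p : R) (x y : n.-tuple R) : 0 <= Ikernel delta p x y.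
Proof. by rewrite divr_ge0 ?powR_ge0. Qed.

Lemma distNC n (x y : n.-tuple R) : distN x y = distN y x.
Proof. by rewrite /distN; congr Num.sqrt; apply: eq_bigr => i _; rewrite -sqrrN opprB. Qed.

Lemma IkernelC n (delta p : R) (x y : n.-tuple R) :
  Ikernel delta p x y = Ikernel delta p y x.
Proof. by rewrite /Ikernel distNC. Qed.

Lemma measurable_Ikernel n (delta p : R) :
  measurable_fun setT (fun z : n.-tuple R * n.-tuple R => Ikernel delta p z.1 z.2).
Proof.
pose sq (z : n.-tuple R * n.-tuple R) := \sum_(i < n) (tnth z.1 i - tnth z.2 i) ^+ 2.
have -> : (fun z => Ikernel delta p z.1 z.2) =
    (fun z => delta `^ p * (sq z `^ 2^-1) `^ (- (n%:R + p))).
  apply: funext => z; rewrite /Ikernel /distN powRN powR12_sqrt //.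
  by apply: sumr_ge0 => i _; exact: sqr_ge0.
apply: measurable_funM; first exact: measurable_cst.
do 2 apply: (measurableT_comp (measurable_powR _)).
apply: measurable_sum => i; apply: measurable_funX; apply: measurable_funB.
  exact: (measurableT_comp (measurable_tnth i) measurable_fst).
exact: (measurableT_comp (measurable_tnth i) measurable_snd).
Qed.

Lemma sum_sqr_cons n (x y : n.+1.-tuple R) :
  \sum_(i < n.+1) (tnth x i - tnth y i) ^+ 2 = (tnth x ord0 - tnth y ord0) ^+ 2 +
  \sum_(j < n) (tnth (behead_tuple x) j - tnth (behead_tuple y) j) ^+ 2.
Proof.
rewrite big_ord_recl; congr (_ + _); apply: eq_bigr => j _.
rewrite !tnth_behead (_ : inord j.+1 = lift ord0 j) //.
by apply: val_inj; rewrite /= inordK // ltnS ltn_ord.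
Qed.

Lemma distN_ge_tnth0 {n} (x y : n.+1.-tuple R) :
  `|tnth x ord0 - tnth y ord0| <= distN x y.
Proof.
rewrite /distN -sqrtr_sqr ler_sqrt; last by apply: sumr_ge0 => i _; exact: sqr_ge0.
by rewrite sum_sqr_cons lerDl; apply: sumr_ge0 => j _; exact: sqr_ge0.
Qed.

Lemma distN_le_unit_cube {n} {x y : n.+1.-tuple R} :
  in_unit_cube (behead_tuple x) -> in_unit_cube (behead_tuple y) ->
  distN x y <= Num.sqrt ((tnth x ord0 - tnth y ord0) ^+ 2 + n%:R).
Proof.
move=> /forallP cx /forallP cy.
rewrite /distN ler_sqrt; last by rewrite addr_ge0 ?sqr_ge0.
rewrite sum_sqr_cons lerD2l.
have -> : (n%:R : R) = \sum_(j < n) 1 by rewrite sumr_const card_ord.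
apply: ler_sum => j _.
by move: (cx j) (cy j) => /andP[a0 a1] /andP[b0 b1]; nra.
Qed.

End Kernel.

Section Construction.
Context {R : realType}.
Variable n : nat.

(* Large enough for [far_dist] to exceed [near_dist] below. *)
Definition offset : R := n%:R + 1.

Lemma offset_ge1 : 1 <= offset.
Proof. by rewrite /offset lerDr ler0n. Qed.

Definition strip (s : R) : nat :=
  if offset <= `|s| <= offset + 1 then (if s < 0 then 0 else 1)
  else if offset + 2 <= `|s| <= offset + 3 then (if s < 0 then 2 else 3) else 4.

Definition strip_lo (i : nat) : R :=
  match i with
  | 0 => - (offset + 1) | 1 => offset | 2 => - (offset + 3) | _ => offset + 2
  end.

Definition mirror (i : nat) : nat :=
  match i with 0 => 1 | 1 => 0 | 2 => 3 | 3 => 2 | _ => 4 end.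

Lemma strip_lt5 (s : R) : (strip s < 5)%N.
Proof. by rewrite /strip; do !case: ifP. Qed.

Lemma strip_opp (s : R) : strip (- s) = mirror (strip s).
Proof.
have A1 := offset_ge1.
rewrite /strip normrN oppr_lt0.
case: ifP => h1.
  have : s != 0 by apply/eqP => s0; move: h1; rewrite s0 normr0 => /andP[h _]; lra.
  by case: (ltgtP s 0).
case: ifP => h2 //.
have : s != 0 by apply/eqP => s0; move: h2; rewrite s0 normr0 => /andP[h _]; lra.
by case: (ltgtP s 0).
Qed.

Lemma strip_eq (s : R) i : (i < 4)%N ->
  (strip s == i) = (strip_lo i <= s <= strip_lo i + 1).
Proof.
have A1 := offset_ge1.
rewrite /strip /strip_lo.
case: (ltrP s 0) => hs; [rewrite ltr0_norm // | rewrite ger0_norm //].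
all: case: ifP => h1; [move/andP: h1 => [h1a h1b] |
   move/negbT: h1; rewrite negb_and -!ltNge => /orP[] h1].
all: try (case: ifP => h2; [move/andP: h2 => [h2a h2b] |
   move/negbT: h2; rewrite negb_and -!ltNge => /orP[] h2]).
all: case: i => [|[|[|[|]]]] //= _; apply/idP/idP => //.
all: try (move=> /andP[h3 h4]; lra).
all: by move=> _; apply/andP; split; lra.
Qed.

Definition region (x : n.+1.-tuple R) : nat :=
  if in_unit_cube (behead_tuple x) then strip (tnth x ord0) else 4.

Lemma region_lt5 x : (region x < 5)%N.
Proof. by rewrite /region; case: ifP => // _; exact: strip_lt5. Qed.

Lemma region_eq x i : (i < 4)%N -> (region x == i) = slab (strip_lo i) 1 x.
Proof.
move=> i4; rewrite /region /slab; case: ifP => _; first by rewrite strip_eq // andbT.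
by rewrite andbF; case: i i4 => [|[|[|[|]]]].
Qed.

Lemma region_slab {x i} : region x = i -> (i < 4)%N -> slab (strip_lo i) 1 x.
Proof. by move=> <- i4; rewrite -region_eq // eqxx. Qed.

Lemma measurable_fun_region (f : nat -> R) :
  measurable_fun setT (fun x : n.+1.-tuple R => f (region x)).
Proof.
have mx0 := @measurable_tnth _ R n.+1 ord0.
have mn : measurable_fun setT (fun x : n.+1.-tuple R => `|tnth x ord0|).
  by apply: measurableT_comp; [exact: normr_measurable | exact: mx0].
have mb (a b : R) : measurable_fun setT (fun x : n.+1.-tuple R => a <= `|tnth x ord0| <= b).
  by apply: measurable_and; apply: measurable_fun_ler => //; exact: measurable_cst.
have -> : (fun x => f (region x)) = (fun x =>
    if in_unit_cube (behead_tuple x) then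
      if offset <= `|tnth x ord0| <= offset + 1 then
        if tnth x ord0 < 0 then f 0 else f 1
      else if offset + 2 <= `|tnth x ord0| <= offset + 3 then
        if tnth x ord0 < 0 then f 2 else f 3
      else f 4
    else f 4).
  by apply: funext => x; rewrite /region /strip; do !case: ifP.
repeat apply: measurable_fun_ifT => //; try exact: measurable_cst.
- apply: measurableT_comp (measurable_in_unit_cube n) _; exact: measurable_behead.
- by apply: measurable_fun_ltr => //; exact: measurable_cst.
- by apply: measurable_fun_ltr => //; exact: measurable_cst.
Qed.

Lemma region_tnth0 {x i} : region x = i -> (i < 4)%N ->
  strip_lo i <= tnth x ord0 <= strip_lo i + 1.
Proof. by move=> /region_slab h /h /andP[]. Qed.

Lemma region_le0 {x i} : region x = i -> (i < 4)%N -> (tnth x ord0 <= 0) = ~~ odd i.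
Proof.
move=> rx i4; have /andP[] := region_tnth0 rx i4; have A1 := offset_ge1.
by case: i {rx} i4 => [|[|[|[|]]]] //= _ x1 x2; apply/idP/idP => //; lra.
Qed.

Lemma regions_apart {x y i j} : region x = i -> region y = j -> (i < 4)%N -> (j < 4)%N ->
  i != j -> 1 <= `|tnth x ord0 - tnth y ord0|.
Proof.
move=> rx ry i4 j4 ij; have A1 := offset_ge1.
have /andP[x1 x2] := region_tnth0 rx i4; have /andP[y1 y2] := region_tnth0 ry j4.
rewrite ler_normr; move: ij x1 x2 y1 y2 {rx ry}; rewrite /strip_lo.
case: i i4 => [|[|[|[|]]]] // _; case: j j4 => [|[|[|[|]]]] // _ _ x1 x2 y1 y2;
  apply/orP; first [left; lra | right; lra].
Qed.

Definition near_dist : R := Num.sqrt (9 + n%:R).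
Definition far_dist : R := 2 * offset + 2.

Lemma near_dist_gt0 : 0 < near_dist.
Proof. by rewrite sqrtr_gt0 ltr_wpDr ?ler0n. Qed.

Lemma near_dist_lt_far_dist : near_dist < far_dist.
Proof.
have n0 : (0 : R) <= n%:R by [].
have D0 : 0 < far_dist by rewrite /far_dist /offset; lra.
rewrite -(gtr0_norm D0) -sqrtr_sqr ltr_sqrt ?exprn_gt0 // /far_dist /offset; nra.
Qed.

Lemma regions_far {x y} : region x = 0 -> region y = 3 ->
  far_dist <= `|tnth x ord0 - tnth y ord0|.
Proof.
move=> /region_tnth0 /(_ isT) /andP[x1 x2] /region_tnth0 /(_ isT) /andP[y1 y2].
rewrite /= in x1 x2 y1 y2; rewrite /far_dist distrC ler_normr; apply/orP; left; lra.
Qed.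

Lemma regions_near {x y} : region x = 1 -> region y = 3 -> distN x y <= near_dist.
Proof.
move=> rx ry.
have /andP[/andP[x1 x2] cx] := region_slab rx isT.
have /andP[/andP[y1 y2] cy] := region_slab ry isT.
apply: le_trans (distN_le_unit_cube cx cy) _.
rewrite ler_sqrt ?addr_ge0 ?ler0n //= in x1 x2 y1 y2 *; nra.
Qed.

Definition e0 : n.+1.-tuple R := [tuple ((i == ord0)%:R : R) | i < n.+1].

Lemma dotN_e0 x : dotN e0 x = tnth x ord0.
Proof.
rewrite /dotN big_ord_recl tnth_mktuple eqxx mul1r big1 ?addr0 // => j _.
by rewrite tnth_mktuple mul0r.
Qed.

Lemma e0_neq0 : e0 <> origin R n.+1.
Proof.
move=> /(congr1 (fun t => tnth t ord0)); rewrite !tnth_mktuple eqxx => /eqP.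
by rewrite oner_eq0.
Qed.

Lemma reflect_hs_e0 x : reflect_hs e0 0 x = cons_tuple (- tnth x ord0) (behead_tuple x).
Proof.
apply: eq_from_tnth => i.
rewrite /reflect_hs tnth_mktuple !dotN_e0 tnth_mktuple eqxx subr0 divr1.
case: (unliftP ord0 i) => [j ->|->]; last by rewrite tnth_mktuple eqxx mulr1 tnth0; ring.
rewrite tnth_mktuple /= mulr0 subr0 tnthS tnth_behead.
by congr tnth; apply: val_inj; rewrite /= inordK // ltnS ltn_ord.
Qed.

Lemma region_reflect x : region (reflect_hs e0 0 x) = mirror (region x).
Proof.
by rewrite reflect_hs_e0 /region tnth0 behead_tuple_cons; case: ifP => // _; exact: strip_opp.
Qed.

Lemma polarize_region (f g : nat -> R) :
  (forall i, (i < 4)%N -> g i = if odd i then Num.min (f i) (f (mirror i))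
                                else Num.max (f i) (f (mirror i))) ->
  g 4 = f 4 -> polarize e0 0 (fun x => f (region x)) = (fun x => g (region x)).
Proof.
move=> gE g4; apply: funext => x; rewrite /polarize /in_halfspace dotN_e0 region_reflect.
have [i4|r4] := ltnP (region x) 4; first by rewrite (region_le0 erefl i4) gE //; case: odd.
have -> : region x = 4 by apply/eqP; rewrite eqn_leq r4 -ltnS region_lt5.
by rewrite g4; case: ifP => _; rewrite ?maxxx ?minxx.
Qed.

Section Jumps.
Variables delta p : R.
Hypotheses (delta_gt0 : 0 < delta) (p_ge1 : 1 <= p).

Local Notation T := (n.+1.-tuple R).

(* Values on the regions in units of [delta / 100], so that a jump larger than
   [delta] means a level gap larger than 100.  For [level] this happens on the
   region pairs {0,2}, {0,3}, {1,2}; polarization exchanges the values on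
   regions 0 and 1, and for [level_pol] it happens on {0,2}, {1,2}, {1,3}. *)
Definition level (i : nat) : int :=
  match i with 0 => 0 | 1 => 2 | 2 => 103 | 3 => 101 | _ => 50 end.

Definition level_pol (i : nat) : int :=
  match i with 0 => 2 | 1 => 0 | 2 => 103 | 3 => 101 | _ => 50 end.

Definition step (k : nat -> int) (x : T) : R := delta * (k (region x))%:~R / 100.

Lemma polarize_step : polarize e0 0 (step level) = step level_pol.
Proof.
apply: (polarize_region (fun i => delta * (level i)%:~R / 100)
  (fun i => delta * (level_pol i)%:~R / 100)) => // i.
have le_step (a b : int) : (a <= b)%R -> delta * a%:~R / 100 <= delta * b%:~R / 100.
  by move=> ab; rewrite ler_pM2r ?invr_gt0 ?ltr0n // ler_pM2l // ler_int.
by case: i => [|[|[|[|]]]] //= _;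
  [rewrite max_r | rewrite min_r | rewrite max_l | rewrite min_l] => //; exact: le_step.
Qed.

(* [Idelta p delta u] is convertible to the double integral of [jump_kernel u]. *)
Definition jump_kernel (u : T -> R) (x y : T) : \bar R :=
  if delta < `|u y - u x| then (Ikernel delta p x y)%:E else 0%E.

Lemma jump_kernel_ge0 u x y : (0 <= jump_kernel u x y)%E.
Proof. by rewrite /jump_kernel; case: ifP; rewrite // lee_fin Ikernel_ge0. Qed.

Lemma measurable_step k : measurable_fun setT (step k).
Proof. exact: (measurable_fun_region (fun i => delta * (k i)%:~R / 100)). Qed.

Lemma jump_step k x y :
  (delta < `|step k y - step k x|) = (100 < `|k (region y) - k (region x)|)%R.
Proof.
rewrite /step -mulrBl -mulrBr -rmorphB /= normrM normrM (gtr0_norm delta_gt0).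
rewrite normfV (gtr0_norm (_ : (0 : R) < 100)) ?ltr0n // -intr_norm.
rewrite -mulrA -[X in X < _]mulr1 ltr_pM2l // ltr_pdivlMr ?ltr0n // mul1r.
by rewrite -(ltr_int R).
Qed.

Lemma measurable_jump_kernel_step k :
  measurable_fun setT (fun z : T * T => jump_kernel (step k) z.1 z.2).
Proof.
have ms := measurable_step k.
apply: measurable_fun_ifT.
- apply: measurable_fun_ltr; first exact: measurable_cst.
  apply: measurableT_comp; first exact: normr_measurable.
  by apply: measurable_funB; [exact: measurableT_comp ms measurable_snd
                              | exact: measurableT_comp ms measurable_fst].
- by apply/measurable_EFinP; exact: measurable_Ikernel.
- exact: measurable_cst.
Qed.

Local Notation q := (n.+1%:R + p).

Lemma q_gt0 : 0 < q.
Proof. by rewrite ltr_wpDl ?ler0n // (lt_le_trans ltr01 p_ge1). Qed.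

Definition near_bound : R := delta `^ p / near_dist `^ q.
Definition far_bound : R := delta `^ p / far_dist `^ q.

Lemma far_bound_gt0 : 0 < far_bound.
Proof.
by rewrite divr_gt0 ?powR_gt0 // (lt_trans near_dist_gt0 near_dist_lt_far_dist).
Qed.

Lemma far_bound_lt_near_bound : far_bound < near_bound.
Proof. by rewrite lt_div_powR ?powR_gt0 ?q_gt0 ?near_dist_gt0 ?near_dist_lt_far_dist. Qed.

Lemma Ikernel_far {x y : T} : region x = 0 -> region y = 3 -> Ikernel delta p x y <= far_bound.
Proof.
move=> rx ry; have D0 := lt_trans near_dist_gt0 near_dist_lt_far_dist.
apply: le_div_powR; rewrite ?powR_ge0 ?q_gt0 //.
exact: le_trans (regions_far rx ry) (distN_ge_tnth0 x y).
Qed.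

Lemma Ikernel_near {x y : T} : region x = 1 -> region y = 3 -> near_bound <= Ikernel delta p x y.
Proof.
move=> rx ry; apply: le_div_powR; rewrite ?powR_ge0 ?q_gt0 ?regions_near //.
apply: lt_le_trans (distN_ge_tnth0 x y).
exact: lt_le_trans ltr01 (regions_apart rx ry isT isT isT).
Qed.

Definition box_lo : R := - (offset + 3).
Definition box_len : R := 2 * offset + 6.

Lemma jump_kernel_level_le_box x y : (jump_kernel (step level) x y <=
  (delta `^ p * (slab box_lo box_len x && slab box_lo box_len y)%:R)%:E)%E.
Proof.
rewrite /jump_kernel jump_step; case: ifP => jxy; last by rewrite lee_fin mulr_ge0 ?powR_ge0.
move ex: (region x) jxy => i; move ey: (region y) => j.
have := region_lt5 x; have := region_lt5 y; rewrite ex ey => j5 i5 jxy.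
have [i4 [j4 ij]] : [/\ (i < 4)%N, (j < 4)%N & i != j].
  by move: jxy; case: i {ex} i5 => [|[|[|[|[|]]]]] //; case: j {ey} j5 => [|[|[|[|[|]]]]].
have -> : slab box_lo box_len x && slab box_lo box_len y.
  have A1 := offset_ge1.
  move: (region_slab ex i4) (region_slab ey j4) => /andP[/andP[x1 x2] cx] /andP[/andP[y1 y2] cy].
  rewrite /slab /box_lo /box_len cx cy !andbT.
  by case: i {ex jxy ij i5} i4 x1 x2 => [|[|[|[|]]]] //= _;
     case: j {ey j5} j4 y1 y2 => [|[|[|[|]]]] //= _ *; apply/andP; split; apply/andP; split; lra.
rewrite mulr1 lee_fin.
have := le_div_powR (powR_ge0 delta p) q_gt0 ltr01
  (le_trans (regions_apart ex ey i4 j4 ij) (distN_ge_tnth0 x y)).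
by rewrite powR1 divr1.
Qed.

Definition cell (c : R) (i j : nat) (x y : T) : \bar R :=
  (c * (slab (strip_lo i) 1 x && slab (strip_lo j) 1 y)%:R)%:E.

Lemma jump_kernel_polarize_gain x y :
  (jump_kernel (step level) x y + cell near_bound 1 3 x y + cell near_bound 3 1 x y <=
   jump_kernel (step level_pol) x y + cell far_bound 0 3 x y + cell far_bound 3 0 x y)%E.
Proof.
have c2 := far_bound_gt0; have c1 := lt_trans c2 far_bound_lt_near_bound.
rewrite /jump_kernel !jump_step /cell -!region_eq //.
move ex: (region x) => i; move ey: (region y) => j.
have := region_lt5 x; have := region_lt5 y; rewrite ex ey.
case: i ex => [|[|[|[|[|]]]]] // rx; case: j ey => [|[|[|[|[|]]]]] // ry _ _ /=.
all: rewrite ?mulr0 ?mulr1 ?adde0 ?add0e ?lee_fin ?Ikernel_ge0 ?(ltW c1) ?(ltW c2) //.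
all: first [exact: Ikernel_near rx ry | exact: Ikernel_far rx ry
  | rewrite IkernelC; first [exact: Ikernel_near ry rx | exact: Ikernel_far ry rx]].
Qed.

Lemma cell_ge0 c i j x y : 0 <= c -> (0 <= cell c i j x y)%E.
Proof. by move=> c0; rewrite lee_fin mulr_ge0. Qed.

Lemma intRN2_cell c i j : 0 <= c -> intRN (fun x => intRN (cell c i j x)) = c%:E.
Proof. by move=> c0; rewrite /cell intRN2_slab ?ltr01 // !mulr1. Qed.

Lemma Idelta_polarize_gain :
  (Idelta p delta (step level) + (near_bound%:E + near_bound%:E) <=
   Idelta p delta (step level_pol) + (far_bound%:E + far_bound%:E))%E.
Proof.
have c2 := far_bound_gt0; have c1 := lt_trans c2 far_bound_lt_near_bound.
have mJ := measurable_jump_kernel_step.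
have mC c i j : measurable_fun setT (fun z : T * T => cell c i j z.1 z.2).
  exact: measurable_slab2.
have J0 := jump_kernel_ge0; have C0 c i j x y := @cell_ge0 c i j x y.
have integrate k b i j i' j' : 0 < b ->
    intRN (fun x => intRN (fun y =>
      jump_kernel (step k) x y + cell b i j x y + cell b i' j' x y)%E) =
    (Idelta p delta (step k) + (b%:E + b%:E))%E.
  move=> /ltW b0; rewrite intRN2_D; last 4 first.
  - exact: emeasurable_funD.
  - exact: mC.
  - by move=> x y; rewrite adde_ge0 ?J0 ?C0.
  - by move=> x y; exact: C0.
  rewrite intRN2_D; last 4 first.
  - exact: mJ.
  - exact: mC.
  - exact: J0.
  - by move=> x y; exact: C0.
  by rewrite !intRN2_cell // addeA.
have := le_intRN2 _ _ _ jump_kernel_polarize_gain.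
rewrite integrate // integrate //; apply.
- by apply: emeasurable_funD => //; exact: emeasurable_funD.
- by apply: emeasurable_funD => //; exact: emeasurable_funD.
- by move=> x y; rewrite !adde_ge0 ?J0 ?C0 ?ltW.
Qed.

Lemma Idelta_level_le : (Idelta p delta (step level) <= (delta `^ p * box_len * box_len)%:E)%E.
Proof.
have := le_intRN2 (measurable_jump_kernel_step level)
  (measurable_slab2 n (delta `^ p) box_lo box_len box_lo box_len)
  (jump_kernel_ge0 _) jump_kernel_level_le_box.
by rewrite intRN2_slab // ?powR_ge0 // /box_len; have := offset_ge1; lra.
Qed.

Lemma Idelta_polarize_gt :
  (Idelta p delta (step level) < Idelta p delta (polarize e0 0 (step level)))%E.
Proof.
have gain := Idelta_polarize_gain; rewrite -!EFinD in gain.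
rewrite polarize_step; apply: lte_of_leD gain _.
  rewrite ge0_fin_numE; first exact: le_lt_trans Idelta_level_le (ltey _).
  by apply: intRN_ge0 => x; apply: intRN_ge0 => y; exact: jump_kernel_ge0.
by rewrite ltrD // far_bound_lt_near_bound.
Qed.

End Jumps.

End Construction.

Theorem theorem1p1 (R : realType) (N : nat) (p : R) :
  (1 <= N)%N -> 1 <= p ->
  exists (delta0 : R) (a : N.-tuple R) (c : R),
    0 < delta0 /\ a <> origin R N /\ in_halfspace a c (origin R N) /\
    forall delta : R, 0 < delta -> delta < delta0 ->
      exists u : N.-tuple R -> R,
        measurable_fun [set: N.-tuple R] u /\
        (Idelta p delta (polarize a c u) > Idelta p delta u)%E.
Proof.
case: N => [//|n] _ p_ge1.
exists 1, (e0 n), 0; split; first exact: ltr01.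
split; first exact: e0_neq0.
split; first by rewrite /in_halfspace dotN_e0 tnth_mktuple.
move=> delta delta_gt0 _; exists (step n delta level); split.
  exact: measurable_step.
exact: Idelta_polarize_gt.
Qed.
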